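(* Let $\xi\in\mathscr C^1([0,2\pi])$ be increasing with $\xi(2\pi)=\xi(0)+2\pi$ (so that $\xi(\theta)-\theta$ extends to a $2\pi$-periodic $\mathscr C^1$ function). Then $$\int_0^{2\pi}\!\!\int_0^{2\pi}\frac{1-\cos[\xi(\theta)-\xi(\phi)]}{1-\cos(\theta-\phi)}\,\big(\xi'(\theta)-1\big)\,d\theta\,d\phi\;\geqslant0,$$ with equality if and only if $\xi(\theta)=\theta+\mathrm{const}$. *)

From Stdlib Require Import Reals.
Open Scope R_scope.

Definition in_I (x : R) : Prop := 0 <= x <= 2 * PI.

Definition cont_on_I (f : R -> R) : Prop :=
  forall x, in_I x -> limit1_in f in_I (f x) x.

(* [xi] is C^1 on [0,2PI] with derivative [dxi]: xi is continuous on [0,2PI],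
   differentiable on (0,2PI) with derivative dxi, and dxi extends continuously
   to [0,2PI] (so dxi at the endpoints is the one-sided derivative). *)
Definition C1_on_I (xi dxi : R -> R) : Prop :=
  cont_on_I xi /\
  (forall x, 0 < x < 2 * PI -> derivable_pt_lim xi x (dxi x)) /\
  cont_on_I dxi.

Definition has_integral (f : R -> R) (a b v : R) : Prop :=
  exists pr : Riemann_integrable f a b, RiemannInt pr = v.

Definition kernel5p3 (xi dxi : R -> R) (theta phi : R) : R :=
  (1 - cos (xi theta - xi phi)) / (1 - cos (theta - phi)) * (dxi theta - 1).

From Stdlib Require Import Reals Lra Lia Psatz Classical ClassicalEpsilon.
Open Scope R_scope.

(* With a = (xi th - xi ph)/2 and b = (th - ph)/2 the integrand is
   (sin a / sin b)^2 (xi' th - 1), and a direct computation gives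
     (sin a / sin b)^2 (xi' th - 1) = xi' th (sin (a - b) / sin b)^2 + d/dth [2 sin a sin (a - b) / sin b].
   The bracket is 2PI-periodic in th, so the inner integral I(ph) equals the
   integral of the nonnegative kernel xi' th (sin (a - b) / sin b)^2; thus I >= 0.
   If J = 0 then, I being continuous, I(PI) = 0, so xi' th sin^2 (a - b) = 0 for
   ph = PI; strict monotonicity excludes xi' = 0 on an interval, whence
   sin (a - b) = 0, and |a - b| < PI forces a = b: xi is a translation. *)

Definition cont_in (f : R -> R) (a b x : R) : Prop :=
  forall eps, 0 < eps -> exists del, 0 < del /\
    forall y, a <= y <= b -> Rabs (y - x) < del -> Rabs (f y - f x) < eps.

(* The retraction of R onto [a,b]; composing with it turns functions that are
   continuous on [a,b] into functions continuous everywhere. *)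
Definition clamp (a b x : R) : R := Rmax a (Rmin b x).

Lemma clamp_in a b x : a <= b -> a <= clamp a b x <= b.
Proof. intros; unfold clamp, Rmax, Rmin; repeat destruct Rle_dec; lra. Qed.

Lemma clamp_id a b x : a <= x <= b -> clamp a b x = x.
Proof. intros; unfold clamp, Rmax, Rmin; repeat destruct Rle_dec; lra. Qed.

Lemma clamp_lip a b x y : a <= b -> Rabs (clamp a b x - clamp a b y) <= Rabs (x - y).
Proof.
  intros; unfold clamp, Rmax, Rmin; repeat destruct Rle_dec;
  unfold Rabs; repeat destruct Rcase_abs; lra.
Qed.

Lemma cont_in_clamp f a b : a <= b -> (forall x, a <= x <= b -> cont_in f a b x) ->
  forall x, continuity_pt (fun t => f (clamp a b t)) x.
Proof.
  intros Hab H x eps Heps.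
  destruct (H (clamp a b x) (clamp_in a b x Hab) eps Heps) as [del [Hd H']].
  exists del; split; [lra|].
  intros y [_ Hy]. simpl in *. unfold R_dist in *.
  apply H'; [apply clamp_in; auto|].
  eapply Rle_lt_trans; [apply clamp_lip; auto| exact Hy].
Qed.

Lemma continuity_pt_cont_in f a b x : continuity_pt f x -> cont_in f a b x.
Proof.
  intros H eps Heps. destruct (H eps Heps) as [del [Hd H']].
  exists del; split; [lra|]. intros y _ Hy.
  destruct (Req_dec y x) as [->|Hne]. { rewrite Rminus_diag, Rabs_R0; lra. }
  apply (H' y). split; [split; [constructor|auto]| exact Hy].
Qed.

Lemma cont_in_ext f g a b x : (forall y, a <= y <= b -> f y = g y) -> a <= x <= b ->
  cont_in f a b x -> cont_in g a b x.
Proof.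
  intros E Hx H eps He. destruct (H eps He) as [d [Hd H']]. exists d; split; auto.
  intros y Hy Hy'. rewrite <- !E; auto.
Qed.

Lemma cont_in_minus f g a b x : cont_in f a b x -> cont_in g a b x ->
  cont_in (fun t => f t - g t) a b x.
Proof.
  intros H1 H2 eps He.
  destruct (H1 (eps/2)) as [d1 [Hd1 H1']]; [lra|].
  destruct (H2 (eps/2)) as [d2 [Hd2 H2']]; [lra|].
  exists (Rmin d1 d2); split; [apply Rmin_pos; lra|]. intros y Hy Hy'.
  generalize (Rmin_l d1 d2) (Rmin_r d1 d2); intros.
  assert (A1 := H1' y Hy ltac:(lra)). assert (A2 := H2' y Hy ltac:(lra)).
  replace (f y - g y - (f x - g x)) with ((f y - f x) - (g y - g x)) by ring.
  eapply Rle_lt_trans; [apply Rabs_triang|]. rewrite Rabs_Ropp. lra.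
Qed.

Lemma cont_in_sub f a b a' b' x : a <= a' -> b' <= b -> cont_in f a b x -> cont_in f a' b' x.
Proof.
  intros Ha Hb H eps He. destruct (H eps He) as [d [Hd H']]. exists d; split; auto.
  intros y Hy Hy'. apply H'; auto; lra.
Qed.

Lemma cont_in_integrable f a b : a <= b -> (forall x, a <= x <= b -> cont_in f a b x) ->
  Riemann_integrable f a b.
Proof.
  intros Hab H.
  apply Riemann_integrable_ext with (f := fun t => f (clamp a b t)).
  - intros x Hx. rewrite Rmin_left, Rmax_right in Hx by lra. rewrite clamp_id; auto.
  - apply continuity_implies_RiemannInt; auto.
    intros x _. apply cont_in_clamp; auto.
Qed.

(* A function vanishing on the open interval is a step function, hence
   integrable; so values at finitely many points never matter below. *)
Lemma integrable_null_open d a b : a <= b -> (forall x, a < x < b -> d x = 0) ->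
  Riemann_integrable d a b.
Proof.
  intros Hab H. destruct (Req_EM_T a b) as [<-|Hne]; [apply RiemannInt_P7|].
  assert (Hs : IsStepFun d a b).
  { exists (cons a (cons b nil)), (cons 0 nil).
    unfold adapted_couple. rewrite Rmin_left, Rmax_right by lra.
    repeat split.
    - intros i Hi. simpl in Hi. assert (i = 0%nat) by lia. subst. simpl. lra.
    - intros i Hi. simpl in Hi. assert (i = 0%nat) by lia. subst. simpl.
      intros x Hx. apply H; auto. }
  intro eps. exists (mkStepFun Hs), (mkStepFun (StepFun_P4 a b 0)). split.
  - intros t _. simpl. unfold fct_cte. rewrite Rminus_diag, Rabs_R0. lra.
  - rewrite StepFun_P18, Rmult_0_l, Rabs_R0. apply cond_pos.
Qed.

Lemma integrable_ext_open f g a b : a <= b -> (forall x, a < x < b -> f x = g x) ->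
  Riemann_integrable f a b -> Riemann_integrable g a b.
Proof.
  intros Hab H Hf.
  assert (Hd : Riemann_integrable (fun x => g x - f x) a b).
  { apply integrable_null_open; auto. intros x Hx. rewrite H; auto. ring. }
  apply Riemann_integrable_ext with (f := fun x => f x + 1 * (g x - f x)).
  - intros; ring.
  - apply RiemannInt_P10; auto.
Qed.

Lemma integrable_ext_but_one f g a b c : a <= b ->
  (forall x, a < x < b -> x <> c -> f x = g x) ->
  Riemann_integrable f a b -> Riemann_integrable g a b.
Proof.
  intros Hab H Hf.
  destruct (Rlt_dec a c) as [Hac|Hac]; [destruct (Rlt_dec c b) as [Hcb|Hcb]|].
  - apply RiemannInt_P21 with c; try lra; apply integrable_ext_open with f; try lra.
    + intros x Hx; apply H; lra.
    + apply RiemannInt_P22 with b; auto; lra.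
    + intros x Hx; apply H; lra.
    + apply RiemannInt_P23 with a; auto; lra.
  - apply integrable_ext_open with f; auto. intros x Hx; apply H; lra.
  - apply integrable_ext_open with f; auto. intros x Hx; apply H; lra.
Qed.

Lemma RiemannInt_ext_but_one f g a b c
  (pr1 : Riemann_integrable f a b) (pr2 : Riemann_integrable g a b) :
  a <= b -> (forall x, a < x < b -> x <> c -> f x = g x) ->
  RiemannInt pr1 = RiemannInt pr2.
Proof.
  intros Hab H.
  destruct (Rlt_dec a c) as [Hac|Hac]; [destruct (Rlt_dec c b) as [Hcb|Hcb]|].
  - assert (p1 : Riemann_integrable f a c) by (apply RiemannInt_P22 with b; auto; lra).
    assert (p2 : Riemann_integrable f c b) by (apply RiemannInt_P23 with a; auto; lra).
    assert (q1 : Riemann_integrable g a c) by (apply RiemannInt_P22 with b; auto; lra).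
    assert (q2 : Riemann_integrable g c b) by (apply RiemannInt_P23 with a; auto; lra).
    rewrite <- (RiemannInt_P26 p1 p2 pr1), <- (RiemannInt_P26 q1 q2 pr2).
    f_equal; apply RiemannInt_P18; try lra; intros x Hx; apply H; lra.
  - apply RiemannInt_P18; auto. intros x Hx; apply H; lra.
  - apply RiemannInt_P18; auto. intros x Hx; apply H; lra.
Qed.

Lemma Rabs_le_between x a : Rabs x <= a -> - a <= x <= a.
Proof. unfold Rabs; destruct Rcase_abs; intros; lra. Qed.

Lemma RiemannInt_ge_const f a b c (pr : Riemann_integrable f a b) : a <= b ->
  (forall x, a < x < b -> c <= f x) -> c * (b - a) <= RiemannInt pr.
Proof.
  intros Hab H. rewrite <- (RiemannInt_P15 (RiemannInt_P14 a b c)).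
  apply RiemannInt_P19; auto.
Qed.

Lemma RiemannInt_abs_le f a b c (pr : Riemann_integrable f a b) : a <= b ->
  (forall x, a < x < b -> Rabs (f x) <= c) -> Rabs (RiemannInt pr) <= c * (b - a).
Proof.
  intros Hab H. apply Rabs_le. split.
  - replace (- (c * (b - a))) with ((- c) * (b - a)) by ring.
    apply RiemannInt_ge_const; auto. intros x Hx. apply (Rabs_le_between _ _ (H x Hx)).
  - rewrite <- (RiemannInt_P15 (RiemannInt_P14 a b c)).
    apply RiemannInt_P19; auto. intros x Hx. apply (Rabs_le_between _ _ (H x Hx)).
Qed.

Lemma RiemannInt_null f a b (pr : Riemann_integrable f a b) : a <= b ->
  (forall x, a < x < b -> f x = 0) -> RiemannInt pr = 0.
Proof.
  intros Hab H.
  assert (B : Rabs (RiemannInt pr) <= 0 * (b - a)).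
  { apply RiemannInt_abs_le; auto. intros x Hx. rewrite H, Rabs_R0; auto; lra. }
  rewrite Rmult_0_l in B. apply Rabs_le_between in B. lra.
Qed.

Lemma RiemannInt_pos f a b x0 (pr : Riemann_integrable f a b) :
  a < x0 < b -> (forall x, a < x < b -> 0 <= f x) -> cont_in f a b x0 ->
  0 < f x0 -> 0 < RiemannInt pr.
Proof.
  intros Hx0 Hpos Hc Hf.
  destruct (Hc (f x0 / 2)) as [del [Hd Hdel]]; [lra|].
  set (e := Rmin del (Rmin (x0 - a) (b - x0)) / 2).
  assert (He : 0 < e) by (unfold e; apply Rmult_lt_0_compat; [repeat apply Rmin_pos| ]; lra).
  assert (He1 : e < del /\ e < x0 - a /\ e < b - x0).
  { unfold e; generalize (Rmin_l del (Rmin (x0 - a) (b - x0)))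
      (Rmin_r del (Rmin (x0 - a) (b - x0))) (Rmin_l (x0 - a) (b - x0))
      (Rmin_r (x0 - a) (b - x0)); lra. }
  assert (p1 : Riemann_integrable f a (x0 - e)) by (apply RiemannInt_P22 with b; auto; lra).
  assert (p23 : Riemann_integrable f (x0 - e) b) by (apply RiemannInt_P23 with a; auto; lra).
  assert (p2 : Riemann_integrable f (x0 - e) (x0 + e)) by (apply RiemannInt_P22 with b; auto; lra).
  assert (p3 : Riemann_integrable f (x0 + e) b) by (apply RiemannInt_P23 with (x0 - e); auto; lra).
  rewrite <- (RiemannInt_P26 p1 p23 pr), <- (RiemannInt_P26 p2 p3 p23).
  assert (I1 : 0 * (x0 - e - a) <= RiemannInt p1).
  { apply RiemannInt_ge_const; [lra|]. intros; apply Hpos; lra. }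
  assert (I3 : 0 * (b - (x0 + e)) <= RiemannInt p3).
  { apply RiemannInt_ge_const; [lra|]. intros; apply Hpos; lra. }
  assert (I2 : (f x0 / 2) * (x0 + e - (x0 - e)) <= RiemannInt p2).
  { apply RiemannInt_ge_const; [lra|]. intros x Hx.
    assert (Hb : Rabs (f x - f x0) < f x0 / 2) by (apply Hdel; [lra| apply Rabs_def1; lra]).
    apply Rabs_def2 in Hb. lra. }
  assert (0 < (f x0 / 2) * (x0 + e - (x0 - e))) by (apply Rmult_lt_0_compat; lra).
  lra.
Qed.

Lemma RiemannInt_zero_nonneg f a b x0 (pr : Riemann_integrable f a b) :
  a < x0 < b -> (forall x, a < x < b -> 0 <= f x) -> cont_in f a b x0 ->
  RiemannInt pr = 0 -> f x0 = 0.
Proof.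
  intros Hx0 Hpos Hc H0. destruct (Hpos x0 Hx0) as [Hlt|]; auto.
  assert (0 < RiemannInt pr) by (apply RiemannInt_pos with x0; auto). lra.
Qed.

Lemma has_integral_ext f g a b v : a <= b -> (forall x, a <= x <= b -> f x = g x) ->
  has_integral f a b v -> has_integral g a b v.
Proof.
  intros Hab E [pr Hv].
  assert (pr' : Riemann_integrable g a b)
    by (apply Riemann_integrable_ext with f; auto; intros x Hx;
        rewrite Rmin_left, Rmax_right in Hx by lra; auto).
  exists pr'. rewrite <- Hv. symmetry. apply RiemannInt_P18; auto. intros; apply E; lra.
Qed.

Lemma MVT_open f f' a b : a < b ->
  (forall c, a < c < b -> derivable_pt_lim f c (f' c)) ->
  (forall c, a <= c <= b -> continuity_pt f c) ->
  exists c, a < c < b /\ f b - f a = f' c * (b - a).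
Proof.
  intros Hab Hd Hc.
  set (pr1 := fun c (P : a < c < b) => exist (fun l => derivable_pt_lim f c l) (f' c) (Hd c P)).
  set (pr2 := fun c (P : a < c < b) => derivable_pt_id c).
  destruct (MVT f id a b pr1 pr2 Hab Hc) as [c [P HP]].
  { intros c _. apply derivable_continuous_pt, derivable_pt_id. }
  exists c; split; auto.
  unfold pr2 in HP. rewrite derive_pt_id in HP. simpl in HP. unfold id in HP. lra.
Qed.

Lemma derivable_pt_lim_local f g x l r : 0 < r ->
  (forall y, Rabs (y - x) < r -> f y = g y) ->
  derivable_pt_lim f x l -> derivable_pt_lim g x l.
Proof.
  intros Hr Hfg H eps Heps. destruct (H eps Heps) as [del Hdel].
  assert (Hm : 0 < Rmin del r) by (apply Rmin_pos; [apply cond_pos| lra]).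
  exists (mkposreal _ Hm). intros h Hh Hhr. simpl in Hhr.
  rewrite <- !Hfg.
  - apply Hdel; auto. eapply Rlt_le_trans; [apply Hhr| apply Rmin_l].
  - rewrite Rminus_diag, Rabs_R0; lra.
  - replace (x + h - x) with h by ring. eapply Rlt_le_trans; [apply Hhr| apply Rmin_r].
Qed.

Lemma interior_ball a b x y : a < x < b -> Rabs (y - x) < Rmin (x - a) (b - x) -> a < y < b.
Proof.
  intros Hx Hy. generalize (Rmin_l (x - a) (b - x)) (Rmin_r (x - a) (b - x)).
  apply Rabs_def2 in Hy. lra.
Qed.

Lemma zero_deriv_ends f a b : a < b -> (forall x, a <= x <= b -> cont_in f a b x) ->
  (forall x, a < x < b -> derivable_pt_lim f x 0) -> f a = f b.
Proof.
  intros Hab Hc Hd.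
  set (fc := fun t => f (clamp a b t)).
  destruct (MVT_open fc (fun _ => 0) a b Hab) as [c [Hc1 Hc2]].
  - intros c Hcc. apply derivable_pt_lim_local with f (Rmin (c - a) (b - c)).
    + apply Rmin_pos; lra.
    + intros y Hy. unfold fc. rewrite clamp_id; auto.
      generalize (interior_ball a b c y Hcc Hy); lra.
    + apply Hd; auto.
  - intros c _. apply cont_in_clamp; auto; lra.
  - unfold fc in Hc2. rewrite !clamp_id in Hc2 by lra. lra.
Qed.

Lemma deriv_nonneg f x l r : 0 < r ->
  (forall y z, Rabs (y - x) < r -> Rabs (z - x) < r -> y <= z -> f y <= f z) ->
  derivable_pt_lim f x l -> 0 <= l.
Proof.
  intros Hr Hm H. destruct (Rle_dec 0 l) as [|Hl]; auto. exfalso.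
  destruct (H (- l / 2)) as [del Hdel]; [lra|].
  set (h := Rmin del r / 2).
  assert (Hpos := Rmin_pos del r (cond_pos del) Hr).
  assert (Hh : 0 < h /\ h < del /\ h < r)
    by (unfold h; generalize (Rmin_l del r) (Rmin_r del r); lra).
  assert (Hq := Hdel h ltac:(lra) ltac:(rewrite Rabs_right; lra)).
  assert (Hmon : f x <= f (x + h)).
  { apply Hm; try lra; [rewrite Rminus_diag, Rabs_R0; lra|].
    replace (x + h - x) with h by ring; rewrite Rabs_right; lra. }
  apply Rabs_def2 in Hq. destruct Hq as [Hq _].
  assert (0 <= (f (x + h) - f x) / h)
    by (apply Rmult_le_pos; [lra| apply Rlt_le, Rinv_0_lt_compat; lra]).
  lra.
Qed.

Lemma derivable_pt_lim_eq f x l l' : derivable_pt_lim f x l -> l = l' -> derivable_pt_lim f x l'.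
Proof. intros H <-; exact H. Qed.

Lemma derivable_pt_lim_sin_comp f x l : derivable_pt_lim f x l ->
  derivable_pt_lim (fun t => sin (f t)) x (cos (f x) * l).
Proof. intros H. exact (derivable_pt_lim_comp f sin x l (cos (f x)) H (derivable_pt_lim_sin _)). Qed.

Lemma derivable_pt_lim_half_incr f x l c : derivable_pt_lim f x l ->
  derivable_pt_lim (fun t => (f t - c) / 2) x (l / 2).
Proof.
  intros H. eapply derivable_pt_lim_eq.
  - apply (derivable_pt_lim_div (fun t => f t - c) (fun _ => 2)); [|apply derivable_pt_lim_const| lra].
    apply (derivable_pt_lim_minus f (fun _ => c)); [exact H| apply derivable_pt_lim_const].
  - unfold Rsqr. field.
Qed.

Lemma FTC_but_one f H a b c (pr : Riemann_integrable f a b) : a < c < b ->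
  (forall x, a <= x <= b -> cont_in f a b x) ->
  (forall x, a <= x <= b -> cont_in H a b x) ->
  (forall x, a < x < b -> x <> c -> derivable_pt_lim H x (f x)) ->
  RiemannInt pr = H b - H a.
Proof.
  intros Hc Hf HH HD. assert (h : a <= b) by lra.
  set (fc := fun t => f (clamp a b t)).
  assert (C0 : forall x, a <= x <= b -> continuity_pt fc x)
    by (intros x _; apply cont_in_clamp; auto).
  set (P := primitive h (FTC_P1 h C0)).
  assert (prc : Riemann_integrable fc a b) by (apply continuity_implies_RiemannInt; auto).
  assert (E : RiemannInt pr = RiemannInt prc).
  { apply RiemannInt_P18; auto. intros x Hx. unfold fc. rewrite clamp_id; [reflexivity| lra]. }
  rewrite E, (RiemannInt_P20 h (FTC_P1 h C0) prc). fold P.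
  assert (DP : forall x, a <= x <= b -> derivable_pt_lim P x (fc x))
    by (intros x Hx; apply RiemannInt_P28; auto).
  (* [P - H] has zero derivative off [c] and is continuous, hence constant. *)
  set (F := fun t => P t - H t).
  assert (HF : forall x, a <= x <= b -> cont_in F a b x).
  { intros x Hx. apply cont_in_minus; auto.
    apply continuity_pt_cont_in, derivable_continuous_pt. exists (fc x). apply DP; auto. }
  assert (DF : forall x, a < x < b -> x <> c -> derivable_pt_lim F x 0).
  { intros x Hx Hn. replace 0 with (fc x - f x) by (unfold fc; rewrite clamp_id; lra).
    apply derivable_pt_lim_minus; [apply DP; lra| apply HD; auto]. }
  assert (F1 : F a = F c).
  { apply zero_deriv_ends; [lra| |].
    - intros x Hx. apply cont_in_sub with a b; try lra. apply HF; lra.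
    - intros x Hx. apply DF; lra. }
  assert (F2 : F c = F b).
  { apply zero_deriv_ends; [lra| |].
    - intros x Hx. apply cont_in_sub with a b; try lra. apply HF; lra.
    - intros x Hx. apply DF; lra. }
  unfold F in F1, F2. lra.
Qed.

Definition jcont (P : R -> R -> Prop) (F : R -> R -> R) (x0 y0 : R) : Prop :=
  forall eps, 0 < eps -> exists del, 0 < del /\
    forall x y, P x y -> Rabs (x - x0) < del -> Rabs (y - y0) < del ->
      Rabs (F x y - F x0 y0) < eps.

Definition rect a b c d (x y : R) : Prop := a <= x <= b /\ c <= y <= d.

Lemma jcont_ext P F G x0 y0 : (forall x y, F x y = G x y) -> jcont P F x0 y0 -> jcont P G x0 y0.
Proof.
  intros E H eps He. destruct (H eps He) as [d [Hd H']]. exists d; split; auto.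
  intros; rewrite <- !E; auto.
Qed.

Lemma jcont_local P F G x0 y0 r : 0 < r ->
  (forall x y, P x y -> Rabs (x - x0) < r -> Rabs (y - y0) < r -> F x y = G x y) ->
  F x0 y0 = G x0 y0 -> jcont P F x0 y0 -> jcont P G x0 y0.
Proof.
  intros Hr E E0 H eps He. destruct (H eps He) as [d [Hd H']].
  exists (Rmin d r); split; [apply Rmin_pos; lra|].
  intros x y Hp Hx Hy.
  generalize (Rmin_l d r) (Rmin_r d r); intros.
  rewrite <- E0, <- E; auto; try lra. apply H'; auto; lra.
Qed.

Lemma jcont_mono (P P' : R -> R -> Prop) F x0 y0 :
  (forall x y, P' x y -> P x y) -> jcont P F x0 y0 -> jcont P' F x0 y0.
Proof. intros HP H eps He. destruct (H eps He) as [d [Hd H']]. exists d; split; auto. Qed.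

Lemma jcont_const P c x0 y0 : jcont P (fun _ _ => c) x0 y0.
Proof. intros eps He. exists 1; split; [lra|]. intros. rewrite Rminus_diag, Rabs_R0; lra. Qed.

Lemma jcont_fst P f x0 y0 : continuity_pt f x0 -> jcont P (fun x _ => f x) x0 y0.
Proof.
  intros H eps He.
  destruct (continuity_pt_cont_in f (x0 - 1) (x0 + 1) x0 H eps He) as [d [Hd H']].
  exists (Rmin d 1); split; [apply Rmin_pos; lra|]. intros x y _ Hx _.
  generalize (Rmin_l d 1) (Rmin_r d 1); intros.
  apply H'; [apply Rabs_def2 in Hx; lra| lra].
Qed.

Lemma jcont_snd P f x0 y0 : continuity_pt f y0 -> jcont P (fun _ y => f y) x0 y0.
Proof.
  intros H eps He.
  destruct (continuity_pt_cont_in f (y0 - 1) (y0 + 1) y0 H eps He) as [d [Hd H']].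
  exists (Rmin d 1); split; [apply Rmin_pos; lra|]. intros x y _ _ Hy.
  generalize (Rmin_l d 1) (Rmin_r d 1); intros.
  apply H'; [apply Rabs_def2 in Hy; lra| lra].
Qed.

Lemma jcont_diff P x0 y0 : jcont P (fun x y => x - y) x0 y0.
Proof.
  intros eps He. exists (eps / 2); split; [lra|]. intros x y _ Hx Hy.
  replace (x - y - (x0 - y0)) with ((x - x0) - (y - y0)) by ring.
  eapply Rle_lt_trans; [apply Rabs_triang|]. rewrite Rabs_Ropp. lra.
Qed.

Lemma jcont_plus P F G x0 y0 : jcont P F x0 y0 -> jcont P G x0 y0 ->
  jcont P (fun x y => F x y + G x y) x0 y0.
Proof.
  intros H1 H2 eps He.
  destruct (H1 (eps/2)) as [d1 [Hd1 H1']]; [lra|].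
  destruct (H2 (eps/2)) as [d2 [Hd2 H2']]; [lra|].
  exists (Rmin d1 d2); split; [apply Rmin_pos; lra|]. intros x y Hp Hx Hy.
  generalize (Rmin_l d1 d2) (Rmin_r d1 d2); intros.
  assert (A1 := H1' x y Hp ltac:(lra) ltac:(lra)).
  assert (A2 := H2' x y Hp ltac:(lra) ltac:(lra)).
  replace (F x y + G x y - (F x0 y0 + G x0 y0))
    with ((F x y - F x0 y0) + (G x y - G x0 y0)) by ring.
  eapply Rle_lt_trans; [apply Rabs_triang|]. lra.
Qed.

Lemma jcont_comp P F g x0 y0 : jcont P F x0 y0 -> continuity_pt g (F x0 y0) ->
  jcont P (fun x y => g (F x y)) x0 y0.
Proof.
  intros H Hg eps He.
  destruct (continuity_pt_cont_in g (F x0 y0 - 1) (F x0 y0 + 1) _ Hg eps He)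
    as [a [Ha Ha']].
  destruct (H (Rmin a 1)) as [d [Hd H']]; [apply Rmin_pos; lra|].
  exists d; split; auto. intros x y Hp Hx Hy.
  assert (Hb := H' x y Hp Hx Hy).
  generalize (Rmin_l a 1) (Rmin_r a 1); intros.
  apply Ha'; [apply Rabs_def2 in Hb; lra| lra].
Qed.

Lemma jcont_scal P F c x0 y0 : jcont P F x0 y0 -> jcont P (fun x y => c * F x y) x0 y0.
Proof.
  intros H. apply (jcont_comp P F (fun t => c * t)); auto.
  apply derivable_continuous_pt, derivable_pt_scal, derivable_pt_id.
Qed.

Lemma jcont_minus P F G x0 y0 : jcont P F x0 y0 -> jcont P G x0 y0 ->
  jcont P (fun x y => F x y - G x y) x0 y0.
Proof.
  intros H1 H2. apply jcont_ext with (fun x y => F x y + (-1) * G x y); [intros; ring|].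
  apply jcont_plus, jcont_scal; auto.
Qed.

(* Products, via the polarization identity 4uv = (u+v)^2 - (u-v)^2. *)
Lemma jcont_mult P F G x0 y0 : jcont P F x0 y0 -> jcont P G x0 y0 ->
  jcont P (fun x y => F x y * G x y) x0 y0.
Proof.
  intros H1 H2.
  assert (Sq : forall t, continuity_pt (fun u => u * u) t)
    by (intro; apply derivable_continuous_pt, derivable_pt_mult; apply derivable_pt_id).
  apply jcont_ext with (fun x y => / 4 * ((fun u => u * u) (F x y + G x y))
                               - / 4 * ((fun u => u * u) (F x y - G x y))).
  { intros; simpl; field. }
  apply jcont_minus; apply jcont_scal.
  - apply (jcont_comp P (fun x y => F x y + G x y) (fun u => u * u)); [apply jcont_plus; auto| apply Sq].
  - apply (jcont_comp P (fun x y => F x y - G x y) (fun u => u * u)); [apply jcont_minus; auto| apply Sq].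
Qed.

Lemma jcont_inv P F x0 y0 : jcont P F x0 y0 -> F x0 y0 <> 0 ->
  jcont P (fun x y => / F x y) x0 y0.
Proof.
  intros H Hn. apply (jcont_comp P F (fun t => / t)); auto.
  apply (continuity_pt_inv (fun t => t)); auto.
  apply derivable_continuous_pt, derivable_pt_id.
Qed.

Lemma jcont_section P F a b y0 x0 : (forall x, a <= x <= b -> P x y0) ->
  jcont P F x0 y0 -> cont_in (fun t => F t y0) a b x0.
Proof.
  intros HP H eps He. destruct (H eps He) as [d [Hd H']]. exists d; split; auto.
  intros y Hy Hy'. apply H'; auto. rewrite Rminus_diag, Rabs_R0; lra.
Qed.

Lemma ValAdh_in (u : nat -> R) a b l : (forall n, a <= u n <= b) -> ValAdh u l -> a <= l <= b.
Proof.
  intros Hu Hl. split; apply Rnot_lt_le; intro Hc;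
    [assert (Hp : 0 < a - l) by lra| assert (Hp : 0 < l - b) by lra];
    (destruct (Hl (disc l (mkposreal _ Hp)) 0%nat) as [p [_ Hp']];
     [exists (mkposreal _ Hp); intros z Hz; auto|]);
    unfold disc in Hp'; simpl in Hp'; apply Rabs_def2 in Hp'; generalize (Hu p); lra.
Qed.

(* Compactness in the first variable: a function jointly continuous along the
   segment [a,b] x {y0} is continuous in y at y0, uniformly in x in [a,b]. *)
Lemma jcont_equicont F a b c d y0 : c <= y0 <= d ->
  (forall x, a <= x <= b -> jcont (rect a b c d) F x y0) ->
  forall eps, 0 < eps -> exists del, 0 < del /\ forall x y,
    a <= x <= b -> c <= y <= d -> Rabs (y - y0) < del -> Rabs (F x y - F x y0) < eps.
Proof.
  intros Hy0 Hjc eps He. apply NNPP; intro Hno.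
  assert (Hn : forall n : nat, exists p : R * R,
    (a <= fst p <= b /\ c <= snd p <= d) /\ Rabs (snd p - y0) < / INR (S n) /\
    eps <= Rabs (F (fst p) (snd p) - F (fst p) y0)).
  { intro n. apply NNPP; intro Hn. apply Hno. exists (/ INR (S n)).
    split; [apply Rinv_0_lt_compat, lt_0_INR; lia|].
    intros x y Hx Hy Hxy. apply Rnot_le_lt; intro. apply Hn. exists (x, y); auto. }
  destruct (choice _ Hn) as [s Hs].
  destruct (Bolzano_Weierstrass (fun n => fst (s n)) _ (compact_P3 a b)) as [l Hl].
  { intro n. apply Hs. }
  assert (Hla : a <= l <= b) by (apply (ValAdh_in _ _ _ _ (fun n => proj1 (proj1 (Hs n))) Hl)).
  destruct (Hjc l Hla (eps / 2)) as [del [Hd Hdel]]; [lra|].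
  destruct (archimed_cor1 del Hd) as [K [HK1 HK2]].
  destruct (Hl (disc l (mkposreal _ Hd)) K) as [n [HnK Hn']].
  { exists (mkposreal _ Hd); intros z Hz; auto. }
  unfold disc in Hn'; simpl in Hn'.
  destruct (Hs n) as [[Hx Hy] [Hyn Heps]].
  assert (Hsmall : / INR (S n) < del).
  { apply Rle_lt_trans with (/ INR K); auto.
    apply Rinv_le_contravar; [apply lt_0_INR; lia| apply le_INR; lia]. }
  assert (E1 := Hdel (fst (s n)) (snd (s n)) (conj Hx Hy) Hn' ltac:(lra)).
  assert (E2 := Hdel (fst (s n)) y0 (conj Hx Hy0) Hn' ltac:(rewrite Rminus_diag, Rabs_R0; lra)).
  apply Rabs_def2 in E1. apply Rabs_def2 in E2.
  revert Heps; unfold Rabs; destruct Rcase_abs; lra.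
Qed.

Lemma PI_bounds : 7/4 <= PI <= 7/2.
Proof. generalize pi2_int; unfold PI; lra. Qed.

Lemma two_PI_pos : 0 < 2 * PI.
Proof. generalize PI_RGT_0; lra. Qed.

(* Jordan-type lower bound for sine, from the degree-7 Taylor lower bound. *)
Lemma sin_lower x : 0 <= x <= PI/2 -> 2/5 * x <= sin x.
Proof.
  intros Hx. assert (Hp := PI_bounds).
  destruct (SIN x) as [H _]; try lra.
  replace (sin_lb x) with (x - x^3/6 + x^5/120 - x^7/5040) in H
    by (unfold sin_lb, sin_approx, sin_term; simpl sum_f_R0; field).
  assert (x * x <= 49/16) by nra.
  assert (x^4/120 - x^6/5040 >= 0).
  { assert (0 <= x^4) by (apply pow_le; lra).
    replace (x^6) with (x^4 * (x*x)) by ring. nra. }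
  nra.
Qed.

Lemma abs_sin_lower x : Rabs x <= PI/2 -> 2/5 * Rabs x <= Rabs (sin x).
Proof.
  intros H. unfold Rabs in *. destruct (Rcase_abs x).
  - assert (Hs := sin_lower (- x) ltac:(lra)). rewrite sin_neg in Hs.
    destruct (Rcase_abs (sin x)); lra.
  - assert (Hs := sin_lower x ltac:(lra)). destruct (Rcase_abs (sin x)); lra.
Qed.

Lemma abs_sin_le x : Rabs (sin x) <= Rabs x.
Proof.
  assert (Hpos : forall y, 0 <= y -> Rabs (sin y) <= y).
  { intros y Hy. destruct (Req_dec y 0) as [->|Hn]; [rewrite sin_0, Rabs_R0; lra|].
    assert (H1 := sin_lt_x y ltac:(lra)). apply Rabs_le. split; [|lra].
    destruct (Rle_dec 1 y); [generalize (SIN_bound y); lra|].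
    assert (0 <= sin y) by (apply sin_ge_0; generalize PI_bounds; lra). lra. }
  unfold Rabs at 2. destruct (Rcase_abs x).
  - rewrite <- (Ropp_involutive x) at 1. rewrite sin_neg, Rabs_Ropp. apply Hpos; lra.
  - apply Hpos; lra.
Qed.

Lemma sin_nz x : 0 < Rabs x < PI -> sin x <> 0.
Proof.
  unfold Rabs; destruct Rcase_abs; intros H.
  - rewrite <- (Ropp_involutive x), sin_neg. assert (0 < sin (- x)) by (apply sin_gt_0; lra). lra.
  - assert (0 < sin x) by (apply sin_gt_0; lra). lra.
Qed.

Definition sinc (x : R) : R := if Req_EM_T x 0 then 1 else sin x / x.

Lemma sinc_mul x : x * sinc x = sin x.
Proof. unfold sinc. destruct (Req_EM_T x 0) as [->|H]; [rewrite sin_0; ring| field; auto]. Qed.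

Lemma sinc_nz x : Rabs x < PI -> sinc x <> 0.
Proof.
  intros H E. destruct (Req_dec x 0) as [->|Hn].
  - unfold sinc in E. destruct (Req_EM_T 0 0); lra.
  - apply (sin_nz x); [split; auto; apply Rabs_pos_lt; auto|].
    rewrite <- sinc_mul, E. ring.
Qed.

(* sinc is continuous (at 0 because sin' 0 = 1). *)
Lemma sinc_cont x : continuity_pt sinc x.
Proof.
  destruct (Req_dec x 0) as [->|Hn].
  - intros eps He. destruct (derivable_pt_lim_sin 0 eps He) as [del Hd].
    exists del; split; [apply cond_pos|].
    intros y [[_ Hy1] Hy2]. simpl in Hy2 |- *. unfold R_dist in *.
    unfold sinc. destruct (Req_EM_T y 0) as [E|E]; [lra|].
    destruct (Req_EM_T 0 0) as [_|E2]; [|lra].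
    assert (Hq := Hd y E ltac:(rewrite Rminus_0_r in Hy2; exact Hy2)).
    rewrite Rplus_0_l, sin_0, Rminus_0_r, cos_0 in Hq. exact Hq.
  - assert (Hc : continuity_pt (fun t => sin t / t) x).
    { apply continuity_pt_div; auto. apply continuity_sin.
      apply derivable_continuous_pt, derivable_pt_id. }
    apply continuity_pt_locally_ext with (fun t => sin t / t) (Rabs x);
      [apply Rabs_pos_lt; auto| |auto].
    intros y Hy. unfold sinc. destruct (Req_EM_T y 0) as [->|]; [|reflexivity].
    unfold Rdist in Hy. rewrite Rminus_0_l, Rabs_Ropp in Hy. lra.
Qed.

Section Kernel.
Variables X D : R -> R.
Hypothesis Xc : forall x, continuity_pt X x.
Hypothesis Dc : forall x, continuity_pt D x.
Hypothesis Xd : forall x, 0 < x < 2 * PI -> derivable_pt_lim X x (D x).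
Hypothesis Xinc : forall x y, 0 <= x <= 2 * PI -> 0 <= y <= 2 * PI -> x < y -> X x < X y.
Hypothesis Xper : X (2 * PI) = X 0 + 2 * PI.

Definition Square := rect 0 (2 * PI) 0 (2 * PI).

Definition slope th ph := if Req_EM_T th ph then D ph else (X th - X ph) / (th - ph).

Lemma slope_mvt th ph : Square th ph ->
  exists c, 0 <= c <= 2 * PI /\ Rmin th ph <= c <= Rmax th ph /\ slope th ph = D c.
Proof.
  intros [H1 H2]. unfold slope, Rmin, Rmax. destruct (Req_EM_T th ph) as [->|Hn].
  - exists ph. destruct Rle_dec; repeat split; lra.
  - destruct (Rle_dec th ph) as [Hl|Hl].
    + destruct (MVT_open X D th ph ltac:(lra)) as [c [Hc1 Hc2]];
        [intros c Hc; apply Xd; lra| intros; apply Xc|].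
      exists c. repeat split; try lra.
      replace (X th - X ph) with (- (X ph - X th)) by ring. rewrite Hc2. field. lra.
    + destruct (MVT_open X D ph th ltac:(lra)) as [c [Hc1 Hc2]];
        [intros c Hc; apply Xd; lra| intros; apply Xc|].
      exists c. repeat split; try lra. rewrite Hc2. field. lra.
Qed.

(* On the diagonal, joint continuity of the slope is the continuity of [D]
   combined with the mean value theorem. *)
Lemma slope_jcont t0 p0 : Square t0 p0 -> jcont Square slope t0 p0.
Proof.
  intros Hs. destruct (Req_dec t0 p0) as [<-|Hn].
  - intros eps He.
    destruct (continuity_pt_cont_in D (t0 - 1) (t0 + 1) t0 (Dc t0) eps He) as [a [Ha Ha']].
    exists (Rmin a 1); split; [apply Rmin_pos; lra|].
    intros x y Hxy Hx Hy. generalize (Rmin_l a 1) (Rmin_r a 1); intros.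
    destruct (slope_mvt x y Hxy) as [c [Hc1 [Hc2 ->]]].
    unfold slope. destruct (Req_EM_T t0 t0) as [_|E]; [|lra].
    apply Rabs_def2 in Hx. apply Rabs_def2 in Hy.
    assert (t0 - Rmin a 1 < Rmin x y) by (apply Rmin_glb_lt; lra).
    assert (Rmax x y < t0 + Rmin a 1) by (apply Rmax_lub_lt; lra).
    apply Ha'; [lra| apply Rabs_def1; lra].
  - set (r := Rabs (t0 - p0) / 2).
    assert (Hr : 0 < r) by (unfold r; generalize (Rabs_pos_lt (t0 - p0) ltac:(lra)); lra).
    apply jcont_local with (F := fun x y => (X x - X y) * / (x - y)) (r := r); auto.
    + intros x y _ Hx Hy. unfold slope. destruct (Req_EM_T x y) as [->|]; [|reflexivity].
      exfalso. unfold r in *. apply Rabs_def2 in Hx. apply Rabs_def2 in Hy.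
      revert Hx Hy; unfold Rabs; destruct Rcase_abs; lra.
    + unfold slope. destruct (Req_EM_T t0 p0); [lra| reflexivity].
    + apply jcont_mult.
      * apply jcont_minus; [apply jcont_fst| apply jcont_snd]; auto.
      * apply jcont_inv; [apply jcont_diff| lra].
Qed.

(* The ratio sin((X th - X ph)/2 - c (th - ph)/2) / sin((th - ph)/2), written with
   [sinc] so that it is visibly continuous across the diagonal. *)
Definition ratio c th ph :=
  (slope th ph - c) * sinc ((slope th ph - c) * ((th - ph) / 2)) / sinc ((th - ph) / 2).

Lemma ratio_jcont c t0 p0 : Square t0 p0 -> Rabs (t0 - p0) < 2 * PI ->
  jcont Square (ratio c) t0 p0.
Proof.
  intros Hs Ht.
  assert (Half : jcont Square (fun x y => (x - y) / 2) t0 p0)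
    by (apply jcont_ext with (fun x y => / 2 * (x - y)); [intros; field| apply jcont_scal, jcont_diff]).
  assert (Sl : jcont Square (fun x y => slope x y - c) t0 p0)
    by (apply jcont_minus; [apply slope_jcont; auto| apply jcont_const]).
  apply (jcont_mult Square (fun x y => (slope x y - c) * sinc ((slope x y - c) * ((x - y) / 2)))
                    (fun x y => / sinc ((x - y) / 2))).
  - apply (jcont_mult Square (fun x y => slope x y - c)); auto.
    apply (jcont_comp Square (fun x y => (slope x y - c) * ((x - y) / 2)) sinc);
      [apply (jcont_mult Square (fun x y => slope x y - c)); auto| apply sinc_cont].
  - apply (jcont_inv Square (fun x y => sinc ((x - y) / 2))).
    + apply (jcont_comp Square (fun x y => (x - y) / 2) sinc); [auto| apply sinc_cont].
    + apply sinc_nz. unfold Rdiv. rewrite Rabs_mult, (Rabs_right (/2)) by lra. lra.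
Qed.

Lemma sin_half_nz th ph : th <> ph -> Rabs (th - ph) < 2 * PI -> sin ((th - ph) / 2) <> 0.
Proof.
  intros Hn Ht. apply sin_nz. unfold Rdiv. rewrite Rabs_mult, (Rabs_right (/2)) by lra.
  split; [|lra]. apply Rmult_lt_0_compat; [apply Rabs_pos_lt; lra| lra].
Qed.

Lemma ratio_formula c th ph : th <> ph -> sin ((th - ph) / 2) <> 0 ->
  ratio c th ph = sin ((X th - X ph) / 2 - c * ((th - ph) / 2)) / sin ((th - ph) / 2).
Proof.
  intros Hn Hs. unfold ratio.
  assert (Hu : (slope th ph - c) * ((th - ph) / 2) = (X th - X ph) / 2 - c * ((th - ph) / 2)).
  { unfold slope. destruct (Req_EM_T th ph); [lra|]. field. lra. }
  assert (Hsb : sinc ((th - ph) / 2) = sin ((th - ph) / 2) / ((th - ph) / 2)).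
  { unfold sinc. destruct (Req_EM_T ((th - ph) / 2) 0); [lra| reflexivity]. }
  rewrite <- Hu, <- (sinc_mul ((slope th ph - c) * ((th - ph) / 2))), Hsb.
  field. split; auto. lra.
Qed.

(* The kernel is (sin a / sin b)^2 (D th - 1) with a, b the half increments of
   X and of the identity; this also holds when sin b = 0 (both sides are 0). *)
Lemma kernel_sin_form th ph :
  kernel5p3 X D th ph = sin ((X th - X ph) / 2) / sin ((th - ph) / 2)
    * (sin ((X th - X ph) / 2) / sin ((th - ph) / 2)) * (D th - 1).
Proof.
  unfold kernel5p3.
  replace (X th - X ph) with (2 * ((X th - X ph) / 2)) at 1 by field.
  replace (th - ph) with (2 * ((th - ph) / 2)) at 1 by field.
  rewrite !cos_2a_sin.
  set (sa := sin ((X th - X ph) / 2)). set (sb := sin ((th - ph) / 2)).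
  destruct (Req_dec sb 0) as [->|E].
  - replace (1 - (1 - 2 * 0 * 0)) with 0 by ring. unfold Rdiv. rewrite Rinv_0. ring.
  - field. split; auto. intro Z. apply E. nra.
Qed.

(* A version of the kernel that is continuous away from the corners (0,2PI),
   (2PI,0) and agrees with the kernel off the diagonal. *)
Definition kernel_c th ph := ratio 0 th ph * ratio 0 th ph * (D th - 1).

(* The nonnegative kernel D th (sin (a - b) / sin b)^2. *)
Definition pos_kernel th ph := D th * (ratio 1 th ph * ratio 1 th ph).

(* The boundary term 2 sin a sin (a - b) / sin b, whose theta-derivative is
   kernel_c - pos_kernel. *)
Definition bdry ph th :=
  2 * sin ((X th - X ph) / 2) * sin ((X th - X ph) / 2 - (th - ph) / 2) / sin ((th - ph) / 2).

Lemma kernel_eq_c th ph : th <> ph -> Rabs (th - ph) < 2 * PI -> kernel5p3 X D th ph = kernel_c th ph.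
Proof.
  intros Hn Ht. unfold kernel_c. rewrite kernel_sin_form, ratio_formula by auto using sin_half_nz.
  replace ((X th - X ph) / 2 - 0 * ((th - ph) / 2)) with ((X th - X ph) / 2) by ring. reflexivity.
Qed.

Lemma kernel_c_jcont t0 p0 : Square t0 p0 -> Rabs (t0 - p0) < 2 * PI -> jcont Square kernel_c t0 p0.
Proof.
  intros Hs Ht. apply (jcont_mult Square (fun x y => ratio 0 x y * ratio 0 x y)).
  - apply jcont_mult; apply ratio_jcont; auto.
  - apply jcont_minus; [apply jcont_fst; auto| apply jcont_const].
Qed.

Lemma pos_kernel_jcont t0 p0 : Square t0 p0 -> Rabs (t0 - p0) < 2 * PI -> jcont Square pos_kernel t0 p0.
Proof.
  intros Hs Ht. apply (jcont_mult Square (fun x _ => D x)); [apply jcont_fst; auto|].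
  apply jcont_mult; apply ratio_jcont; auto.
Qed.

(* bdry written through [ratio], which makes it continuous across th = ph. *)
Lemma bdry_ratio th ph : Rabs (th - ph) < 2 * PI ->
  bdry ph th = 2 * sin ((X th - X ph) / 2) * ratio 1 th ph.
Proof.
  intros Ht. destruct (Req_dec th ph) as [<-|Hn].
  - unfold bdry. rewrite !Rminus_diag. unfold Rdiv. rewrite !Rmult_0_l, sin_0. ring.
  - unfold bdry. rewrite ratio_formula by auto using sin_half_nz.
    replace (1 * ((th - ph) / 2)) with ((th - ph) / 2) by ring. field. auto using sin_half_nz.
Qed.

Lemma section_cont F ph a b x : (forall t p, Square t p -> Rabs (t - p) < 2 * PI -> jcont Square F t p) ->
  0 <= a -> b <= 2 * PI -> 0 <= ph <= 2 * PI -> a <= x <= b -> Rabs (x - ph) < 2 * PI ->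
  cont_in (fun t => F t ph) a b x.
Proof.
  intros HF Ha Hb Hp Hx Ht. apply (jcont_section Square); [intros; split; lra|].
  apply HF; auto. split; lra.
Qed.

Lemma bdry_cont ph x : 0 < ph < 2 * PI -> 0 <= x <= 2 * PI -> cont_in (bdry ph) 0 (2 * PI) x.
Proof.
  intros Hp Hx.
  apply cont_in_ext with (fun t => 2 * sin ((X t - X ph) / 2) * ratio 1 t ph); auto.
  { intros y Hy. symmetry. apply bdry_ratio. apply Rabs_def1; lra. }
  apply (section_cont (fun t p => 2 * sin ((X t - X p) / 2) * ratio 1 t p)); try lra;
    [|apply Rabs_def1; lra].
  intros t p Hs Ht. apply jcont_mult; [|apply ratio_jcont; auto].
  apply jcont_scal. apply (jcont_comp Square (fun x y => (X x - X y) / 2) sin); [|apply continuity_sin].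
  apply jcont_ext with (fun x y => / 2 * (X x - X y)); [intros; field|].
  apply jcont_scal, jcont_minus; [apply jcont_fst| apply jcont_snd]; auto.
Qed.

Lemma bdry_deriv ph th : 0 <= ph <= 2 * PI -> 0 < th < 2 * PI -> th <> ph ->
  derivable_pt_lim (bdry ph) th (kernel_c th ph - pos_kernel th ph).
Proof.
  intros Hp Ht Hn.
  assert (Hs := sin_half_nz th ph Hn ltac:(apply Rabs_def1; lra)).
  set (A := fun t => (X t - X ph) / 2). set (B := fun t => (t - ph) / 2).
  assert (DA : derivable_pt_lim A th (D th / 2)) by (apply derivable_pt_lim_half_incr, Xd; lra).
  assert (DB : derivable_pt_lim B th (1 / 2)) by (apply derivable_pt_lim_half_incr, derivable_pt_lim_id).
  eapply derivable_pt_lim_eq.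
  - apply (derivable_pt_lim_div (fun t => 2 * sin (A t) * sin (A t - B t)) (fun t => sin (B t)));
      [| apply derivable_pt_lim_sin_comp, DB| exact Hs].
    apply (derivable_pt_lim_mult (fun t => 2 * sin (A t)) (fun t => sin (A t - B t))).
    + apply (derivable_pt_lim_scal (fun t => sin (A t)) 2), derivable_pt_lim_sin_comp, DA.
    + apply derivable_pt_lim_sin_comp, (derivable_pt_lim_minus A B); [exact DA| exact DB].
  - unfold kernel_c, pos_kernel. rewrite !ratio_formula by auto.
    fold (A th) (B th) in *. unfold Rsqr.
    replace (A th - 0 * B th) with (A th) by ring. replace (1 * B th) with (B th) by ring.
    rewrite sin_minus, cos_minus.
    assert (E : cos (B th) * cos (B th) = 1 - sin (B th) * sin (B th))
      by (generalize (sin2_cos2 (B th)); unfold Rsqr; lra).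
    apply Rminus_diag_uniq. field_simplify; auto.
    replace (cos (B th) ^ 2) with (1 - sin (B th) ^ 2) by (simpl; lra).
    field. auto.
Qed.

Lemma bdry_periodic ph : bdry ph (2 * PI) = bdry ph 0.
Proof.
  unfold bdry. rewrite Xper.
  replace ((X 0 + 2 * PI - X ph) / 2) with ((X 0 - X ph) / 2 + PI) by field.
  replace ((2 * PI - ph) / 2) with ((0 - ph) / 2 + PI) by field.
  replace ((X 0 - X ph) / 2 + PI - ((0 - ph) / 2 + PI))
    with ((X 0 - X ph) / 2 - (0 - ph) / 2) by ring.
  rewrite !neg_sin. unfold Rdiv. rewrite Rinv_opp. ring.
Qed.

Lemma kernel_periodic th : kernel5p3 X D th 0 = kernel5p3 X D th (2 * PI).
Proof.
  unfold kernel5p3. rewrite Xper.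
  replace (X th - (X 0 + 2 * PI)) with ((X th - X 0) - 2 * PI) by ring.
  replace (th - 2 * PI) with ((th - 0) - 2 * PI) by ring.
  rewrite !(cos_minus _ (2 * PI)), cos_2PI, sin_2PI. f_equal; f_equal; f_equal; ring.
Qed.

Lemma kernel_integrable_on ph a b : 0 <= a -> a <= b -> b <= 2 * PI -> 0 <= ph <= 2 * PI ->
  (forall x, a <= x <= b -> Rabs (x - ph) < 2 * PI) ->
  Riemann_integrable (fun th => kernel5p3 X D th ph) a b.
Proof.
  intros Ha Hab Hb Hp Hd.
  apply integrable_ext_but_one with (fun th => kernel_c th ph) ph; auto.
  - intros x Hx Hn. symmetry. apply kernel_eq_c; auto. apply Hd; lra.
  - apply cont_in_integrable; auto. intros x Hx.
    apply section_cont; auto using kernel_c_jcont; lra.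
Qed.

Lemma kernel_integrable ph : 0 <= ph <= 2 * PI ->
  Riemann_integrable (fun th => kernel5p3 X D th ph) 0 (2 * PI).
Proof.
  intros Hp. assert (HPI := PI_RGT_0).
  assert (Near : forall p a b, 0 <= a -> a <= b -> b <= 2 * PI -> 0 <= p <= 2 * PI ->
            b - 2 * PI < p < a + 2 * PI -> Riemann_integrable (fun th => kernel5p3 X D th p) a b)
    by (intros; apply kernel_integrable_on; auto; intros; apply Rabs_def1; lra).
  destruct (Rlt_dec 0 ph) as [H0|H0]; [destruct (Rlt_dec ph (2 * PI)) as [H1|H1]|].
  - apply Near; lra.
  (* at the endpoints, kernel(., 0) = kernel(., 2PI) is integrable on both halves *)
  - replace ph with (2 * PI) by lra. apply RiemannInt_P21 with PI; [lra| lra| |apply Near; lra].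
    apply Riemann_integrable_ext with (f := fun th => kernel5p3 X D th 0); [|apply Near; lra].
    intros; apply kernel_periodic.
  - replace ph with 0 by lra. apply RiemannInt_P21 with PI; [lra| lra| apply Near; lra|].
    apply Riemann_integrable_ext with (f := fun th => kernel5p3 X D th (2 * PI)); [|apply Near; lra].
    intros; symmetry; apply kernel_periodic.
Qed.

(* The inner integral I(ph) = int_0^{2PI} kernel(th, ph) dth (0 outside [0,2PI]). *)
Definition inner_int ph : R :=
  match Rle_dec 0 ph, Rle_dec ph (2 * PI) with
  | left h1, left h2 => RiemannInt (kernel_integrable ph (conj h1 h2))
  | _, _ => 0
  end.

Lemma inner_int_eq ph (pr : Riemann_integrable (fun th => kernel5p3 X D th ph) 0 (2 * PI)) :
  0 <= ph <= 2 * PI -> inner_int ph = RiemannInt pr.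
Proof.
  intros Hp. unfold inner_int.
  destruct (Rle_dec 0 ph); [|lra]. destruct (Rle_dec ph (2 * PI)); [|lra].
  apply RiemannInt_P5.
Qed.

Lemma D_nonneg x : 0 < x < 2 * PI -> 0 <= D x.
Proof.
  intros Hx. apply (deriv_nonneg X x (D x) (Rmin (x - 0) (2 * PI - x))); [apply Rmin_pos; lra| |apply Xd; auto].
  intros y z Hy Hz Hyz. apply interior_ball in Hy; [|exact Hx]. apply interior_ball in Hz; [|exact Hx].
  destruct (Req_dec y z) as [->|Hn]; [lra|]. left. apply Xinc; lra.
Qed.

Lemma pos_kernel_nonneg x ph : 0 < x < 2 * PI -> 0 <= pos_kernel x ph.
Proof. intros Hx. unfold pos_kernel. apply Rmult_le_pos; [apply D_nonneg; auto| nra]. Qed.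

Lemma pos_kernel_integrable ph : 0 < ph < 2 * PI ->
  Riemann_integrable (fun t => pos_kernel t ph) 0 (2 * PI).
Proof.
  intros Hp. apply cont_in_integrable; [lra|]. intros x Hx.
  apply section_cont; auto using pos_kernel_jcont; try lra. apply Rabs_def1; lra.
Qed.

(* Integrating the identity kernel = pos_kernel + d/dth bdry over a period:
   the boundary term is periodic, so I(ph) = int pos_kernel(th, ph) dth. *)
Lemma inner_int_pos_kernel ph (prG : Riemann_integrable (fun t => pos_kernel t ph) 0 (2 * PI)) :
  0 < ph < 2 * PI -> inner_int ph = RiemannInt prG.
Proof.
  intros Hp. assert (HT := two_PI_pos).
  assert (Sec : forall F x, (forall t p, Square t p -> Rabs (t - p) < 2 * PI -> jcont Square F t p) ->
            0 <= x <= 2 * PI -> cont_in (fun t => F t ph) 0 (2 * PI) x)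
    by (intros; apply section_cont; auto; try lra; apply Rabs_def1; lra).
  assert (prK : Riemann_integrable (fun t => kernel_c t ph) 0 (2 * PI))
    by (apply cont_in_integrable; [lra|]; intros; apply Sec; auto using kernel_c_jcont).
  rewrite (inner_int_eq ph (kernel_integrable ph ltac:(lra))) by lra.
  rewrite (RiemannInt_ext_but_one _ _ _ _ ph _ prK); [|lra|].
  2:{ intros x Hx Hn. apply kernel_eq_c; auto. apply Rabs_def1; lra. }
  set (prD := RiemannInt_P10 (-1) prK prG).
  assert (E := RiemannInt_P13 prK prG prD).
  assert (F : RiemannInt prD = bdry ph (2 * PI) - bdry ph 0).
  2: rewrite bdry_periodic in F; lra.
  apply FTC_but_one with ph; auto.
  - intros x Hx. apply cont_in_ext with (fun t => kernel_c t ph - pos_kernel t ph); auto.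
    + intros; ring.
    + apply cont_in_minus; apply Sec; auto using kernel_c_jcont, pos_kernel_jcont.
  - intros x Hx. apply bdry_cont; auto.
  - intros x Hx Hn. eapply derivable_pt_lim_eq; [apply bdry_deriv; auto; lra| ring].
Qed.

Lemma inner_int_nonneg ph : 0 < ph < 2 * PI -> 0 <= inner_int ph.
Proof.
  intros Hp. rewrite (inner_int_pos_kernel ph (pos_kernel_integrable ph Hp) Hp).
  apply Rle_trans with (0 * (2 * PI - 0)); [lra|].
  apply RiemannInt_ge_const; [generalize two_PI_pos; lra|].
  intros; apply pos_kernel_nonneg; auto.
Qed.

Lemma D_bound : exists M, 0 <= M /\ forall x, 0 <= x <= 2 * PI -> Rabs (D x) <= M.
Proof.
  destruct (continuity_ab_maj (fun t => Rabs (D t)) 0 (2 * PI)) as [m [Hm _]].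
  - generalize two_PI_pos; lra.
  - intros c _. apply (continuity_pt_comp D Rabs); auto. apply Rcontinuity_abs.
  - exists (Rabs (D m)). split; [apply Rabs_pos| auto].
Qed.

Lemma X_lipschitz M : (forall x, 0 <= x <= 2 * PI -> Rabs (D x) <= M) ->
  forall a b, 0 <= a <= 2 * PI -> 0 <= b <= 2 * PI -> Rabs (X a - X b) <= M * Rabs (a - b).
Proof.
  intros HM a b Ha Hb. destruct (Req_dec a b) as [<-|Hn].
  { rewrite !Rminus_diag, Rabs_R0. lra. }
  destruct (slope_mvt a b (conj Ha Hb)) as [c [Hc [_ Hq]]].
  replace (X a - X b) with (slope a b * (a - b)) by (unfold slope; destruct Req_EM_T; [lra| field; lra]).
  rewrite Hq, Rabs_mult. apply Rmult_le_compat_r; [apply Rabs_pos| apply HM; auto].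
Qed.

Lemma abs_sin_ratio M u v : 0 <= M -> Rabs u <= M * Rabs v -> Rabs v <= PI / 2 ->
  Rabs (sin u) <= 5 / 2 * M * Rabs (sin v).
Proof.
  intros HM H1 H2. assert (H3 := abs_sin_lower v H2). assert (H4 := abs_sin_le u).
  assert (M * Rabs v <= M * (5 / 2 * Rabs (sin v))) by (apply Rmult_le_compat_l; lra).
  lra.
Qed.

(* sin of the half increment of X is controlled by sin of the half increment
   of the identity, up to the factor 5M/2; near the corners of the square
   this uses X (2PI) = X 0 + 2PI. *)
Lemma half_increment_bound M : 0 <= M -> (forall x, 0 <= x <= 2 * PI -> Rabs (D x) <= M) ->
  forall th ph, 0 <= th <= 2 * PI -> 0 <= ph <= 2 * PI ->
  Rabs (sin ((X th - X ph) / 2)) <= 5 / 2 * M * Rabs (sin ((th - ph) / 2)).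
Proof.
  intros HM0 HM. assert (L := X_lipschitz M HM). assert (HPI := PI_RGT_0).
  assert (Half : forall u, Rabs (u / 2) = Rabs u / 2)
    by (intro; unfold Rdiv; rewrite Rabs_mult, (Rabs_right (/2)) by lra; ring).
  assert (Ordered : forall th ph, 0 <= th <= 2 * PI -> 0 <= ph <= 2 * PI -> ph <= th ->
            Rabs (sin ((X th - X ph) / 2)) <= 5 / 2 * M * Rabs (sin ((th - ph) / 2))).
  { intros th ph Ht Hp Hle. destruct (Rle_dec (th - ph) PI) as [Hc|Hc].
    - apply abs_sin_ratio; auto; rewrite !Half, (Rabs_right (th - ph)) by lra; [|lra].
      generalize (L th ph Ht Hp). rewrite (Rabs_right (th - ph)) by lra. lra.
    - (* far from the diagonal: shift both half increments by PI *)
      replace ((X th - X ph) / 2) with (((X th - X (2 * PI)) + (X 0 - X ph)) / 2 + PI)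
        by (rewrite Xper; field).
      replace ((th - ph) / 2) with ((th - ph - 2 * PI) / 2 + PI) by field.
      rewrite !neg_sin, !Rabs_Ropp.
      apply abs_sin_ratio; auto; rewrite !Half, (Rabs_left1 (th - ph - 2 * PI)) by lra; [|lra].
      generalize (L th (2 * PI) Ht ltac:(lra)) (L 0 ph ltac:(lra) Hp)
        (Rabs_triang (X th - X (2 * PI)) (X 0 - X ph)).
      rewrite (Rabs_left1 (th - 2 * PI)), (Rabs_left1 (0 - ph)) by lra. lra. }
  intros th ph Ht Hp. destruct (Rle_dec ph th); auto.
  replace ((X th - X ph) / 2) with (- ((X ph - X th) / 2)) by field.
  replace ((th - ph) / 2) with (- ((ph - th) / 2)) by field.
  rewrite !sin_neg, !Rabs_Ropp. apply Ordered; auto; lra.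
Qed.

Lemma kernel_bound : exists MK, 0 <= MK /\ forall th ph, 0 <= th <= 2 * PI -> 0 <= ph <= 2 * PI ->
  Rabs (kernel5p3 X D th ph) <= MK.
Proof.
  destruct D_bound as [M [HM0 HM]].
  exists ((5 / 2 * M) * (5 / 2 * M) * (M + 1)). split; [apply Rmult_le_pos; nra|].
  intros th ph Ht Hp. rewrite kernel_sin_form, !Rabs_mult.
  assert (HD : Rabs (D th - 1) <= M + 1).
  { eapply Rle_trans; [apply Rabs_triang|]. rewrite Rabs_Ropp, Rabs_R1. generalize (HM th Ht); lra. }
  assert (Hq : Rabs (sin ((X th - X ph) / 2) / sin ((th - ph) / 2)) <= 5 / 2 * M).
  { set (sb := sin ((th - ph) / 2)). unfold Rdiv. rewrite Rabs_mult.
    destruct (Req_dec sb 0) as [->|E]; [rewrite Rinv_0, Rabs_R0; nra|].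
    rewrite Rabs_inv. apply (Rmult_le_reg_r (Rabs sb)); [apply Rabs_pos_lt; auto|].
    rewrite Rmult_assoc, Rinv_l by (apply Rabs_no_R0; auto).
    generalize (half_increment_bound M HM0 HM th ph Ht Hp). fold sb. lra. }
  apply Rmult_le_compat; [apply Rmult_le_pos; apply Rabs_pos| apply Rabs_pos| |auto].
  apply Rmult_le_compat; try apply Rabs_pos; auto.
Qed.

Lemma kernel_c_integrable ph e : 0 < e < PI -> 0 <= ph <= 2 * PI ->
  Riemann_integrable (fun t => kernel_c t ph) e (2 * PI - e).
Proof.
  intros He Hp. apply cont_in_integrable; [lra|]. intros x Hx.
  apply section_cont; auto using kernel_c_jcont; try lra. apply Rabs_def1; lra.
Qed.

Lemma inner_int_truncate MK ph e (pr : Riemann_integrable (fun t => kernel_c t ph) e (2 * PI - e)) :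
  (forall th ph, 0 <= th <= 2 * PI -> 0 <= ph <= 2 * PI -> Rabs (kernel5p3 X D th ph) <= MK) ->
  0 <= ph <= 2 * PI -> 0 < e < PI -> Rabs (inner_int ph - RiemannInt pr) <= 2 * MK * e.
Proof.
  intros HMK Hp He. assert (pr0 := kernel_integrable ph Hp).
  rewrite (inner_int_eq ph pr0 Hp). revert pr0. set (k := fun th => kernel5p3 X D th ph). intro pr0.
  assert (p1 : Riemann_integrable k 0 e) by (apply RiemannInt_P22 with (2 * PI); auto; lra).
  assert (p23 : Riemann_integrable k e (2 * PI)) by (apply RiemannInt_P23 with 0; auto; lra).
  assert (p2 : Riemann_integrable k e (2 * PI - e)) by (apply RiemannInt_P22 with (2 * PI); auto; lra).
  assert (p3 : Riemann_integrable k (2 * PI - e) (2 * PI)) by (apply RiemannInt_P23 with e; auto; lra).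
  rewrite <- (RiemannInt_P26 p1 p23 pr0), <- (RiemannInt_P26 p2 p3 p23).
  rewrite (RiemannInt_ext_but_one _ _ _ _ ph p2 pr); [|lra|].
  2:{ intros x Hx Hn. apply kernel_eq_c; auto. apply Rabs_def1; lra. }
  assert (B1 : Rabs (RiemannInt p1) <= MK * (e - 0))
    by (apply RiemannInt_abs_le; [lra|]; intros; apply HMK; lra).
  assert (B3 : Rabs (RiemannInt p3) <= MK * (2 * PI - (2 * PI - e)))
    by (apply RiemannInt_abs_le; [lra|]; intros; apply HMK; lra).
  replace (RiemannInt p1 + (RiemannInt pr + RiemannInt p3) - RiemannInt pr)
    with (RiemannInt p1 + RiemannInt p3) by ring.
  eapply Rle_trans; [apply Rabs_triang| lra].
Qed.

(* I is continuous on [0,2PI]: cut off the corners with the kernel bound, and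
   use equicontinuity of kernel_c on the remaining rectangle. *)
Lemma inner_int_cont p0 : 0 <= p0 <= 2 * PI -> cont_in inner_int 0 (2 * PI) p0.
Proof.
  intros Hp0 eps He. assert (HT := two_PI_pos). assert (HPI := PI_RGT_0).
  destruct kernel_bound as [MK [HMK0 HMK]].
  set (e := Rmin (eps / (8 * (MK + 1))) (PI / 2)).
  assert (He0 : 0 < e) by (unfold e; apply Rmin_pos; [apply Rdiv_lt_0_compat; lra| lra]).
  assert (He1 : e <= PI / 2) by apply Rmin_r.
  assert (He2 : 2 * MK * e <= eps / 4).
  { assert (e <= eps / (8 * (MK + 1))) by apply Rmin_l.
    assert ((MK + 1) * e <= (MK + 1) * (eps / (8 * (MK + 1)))) by (apply Rmult_le_compat_l; lra).
    replace ((MK + 1) * (eps / (8 * (MK + 1)))) with (eps / 8) in * by (field; lra). nra. }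
  destruct (jcont_equicont kernel_c e (2 * PI - e) 0 (2 * PI) p0 Hp0) with (eps / (8 * PI))
    as [del [Hd Hdel]]; [|apply Rdiv_lt_0_compat; lra|].
  { intros x Hx. apply jcont_mono with Square; [intros a b [Ha Hb]; split; lra|].
    apply kernel_c_jcont; [split; lra| apply Rabs_def1; lra]. }
  exists del; split; auto. intros ph Hp Hpd.
  set (pr1 := kernel_c_integrable ph e ltac:(lra) Hp).
  set (pr2 := kernel_c_integrable p0 e ltac:(lra) Hp0).
  assert (B1 := inner_int_truncate MK ph e pr1 HMK Hp ltac:(lra)).
  assert (B2 := inner_int_truncate MK p0 e pr2 HMK Hp0 ltac:(lra)).
  set (pr3 := RiemannInt_P10 (-1) pr1 pr2).
  assert (E3 := RiemannInt_P13 pr1 pr2 pr3).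
  assert (B3 : Rabs (RiemannInt pr3) <= eps / (8 * PI) * (2 * PI - e - e)).
  { apply RiemannInt_abs_le; [lra|]. intros x Hx.
    replace (kernel_c x ph + -1 * kernel_c x p0) with (kernel_c x ph - kernel_c x p0) by ring.
    left. apply Hdel; auto; lra. }
  assert (B4 : eps / (8 * PI) * (2 * PI - e - e) <= eps / 4).
  { replace (eps / 4) with (eps / (8 * PI) * (2 * PI)) by (field; lra).
    apply Rmult_le_compat_l; [apply Rlt_le, Rdiv_lt_0_compat; lra| lra]. }
  apply Rabs_le_between in B1. apply Rabs_le_between in B2. apply Rabs_le_between in B3.
  apply Rabs_def1; lra.
Qed.

Lemma inner_int_integrable : Riemann_integrable inner_int 0 (2 * PI).
Proof. apply cont_in_integrable; [generalize two_PI_pos; lra|]. intros; apply inner_int_cont; auto. Qed.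

(* Half the deviation of X from the translation that agrees with it at PI. *)
Definition dev th := ((X th - th) - (X PI - PI)) / 2.

Lemma X_le x y : 0 <= x <= 2 * PI -> 0 <= y <= 2 * PI -> x <= y -> X x <= X y.
Proof. intros Hx Hy [Hxy| ->]; [left; apply Xinc; auto| lra]. Qed.

(* Monotonicity and X (2PI) = X 0 + 2PI confine X th - X PI to an interval of
   length 2PI, so the deviation is less than PI in absolute value. *)
Lemma dev_small th : 0 <= th <= 2 * PI -> Rabs (dev th) < PI.
Proof.
  intros Ht. assert (HPI := PI_RGT_0).
  assert (X0 : X 0 < X PI) by (apply Xinc; lra).
  assert (X2 : X PI < X (2 * PI)) by (apply Xinc; lra).
  unfold dev. apply Rabs_def1; destruct (Rle_dec th PI);
    generalize (X_le th PI Ht ltac:(lra)) (X_le 0 th ltac:(lra) Ht)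
      (X_le PI th ltac:(lra) Ht) (X_le th (2 * PI) Ht ltac:(lra)); lra.
Qed.

Lemma pos_kernel_zero_cases x : 0 < x < 2 * PI -> pos_kernel x PI = 0 ->
  D x = 0 \/ sin (dev x) = 0.
Proof.
  intros Hx H. destruct (Req_dec x PI) as [->|Hn].
  { right. unfold dev. replace ((X PI - PI - (X PI - PI)) / 2) with 0 by field. apply sin_0. }
  assert (Hs := sin_half_nz x PI Hn ltac:(apply Rabs_def1; lra)).
  unfold pos_kernel in H. rewrite ratio_formula in H by auto.
  replace ((X x - X PI) / 2 - 1 * ((x - PI) / 2)) with (dev x) in H by (unfold dev; field).
  apply Rmult_integral in H. destruct H as [H|H]; [left; auto| right].
  unfold Rdiv in H. apply Rmult_integral in H.
  destruct H as [H|H]; apply Rmult_integral in H; destruct H as [H|H]; auto;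
    destruct (Rinv_neq_0_compat _ Hs H).
Qed.

(* If pos_kernel(., PI) vanishes, sin (dev th) vanishes everywhere: where it
   does not, D vanishes on a whole interval, against strict monotonicity. *)
Lemma sin_dev_zero : (forall x, 0 < x < 2 * PI -> pos_kernel x PI = 0) ->
  forall x, 0 <= x <= 2 * PI -> sin (dev x) = 0.
Proof.
  intros H0 x Hx. apply NNPP; intro Hn. assert (HT := two_PI_pos).
  assert (Hc : continuity_pt (fun t => sin (dev t)) x).
  { apply (continuity_pt_comp dev sin); [|apply continuity_sin]. unfold dev.
    apply continuity_pt_div; [|apply continuity_pt_const; intros ? ?; reflexivity| lra].
    apply continuity_pt_minus; [|apply continuity_pt_const; intros ? ?; reflexivity].
    apply continuity_pt_minus; [apply Xc| apply derivable_continuous_pt, derivable_pt_id]. }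
  destruct (continuous_neq_0 _ x Hc Hn) as [del Hdel].
  assert (Hd := cond_pos del).
  set (lo := Rmax 0 (x - del)). set (hi := Rmin (2 * PI) (x + del)).
  assert (Hlo : 0 <= lo /\ x - del <= lo /\ lo < hi /\ hi <= 2 * PI /\ hi <= x + del).
  { unfold lo, hi. generalize (Rmax_l 0 (x - del)) (Rmax_r 0 (x - del))
      (Rmin_l (2 * PI) (x + del)) (Rmin_r (2 * PI) (x + del)).
    unfold Rmax, Rmin; repeat destruct Rle_dec; lra. }
  set (a := (2 * lo + hi) / 3). set (b := (lo + 2 * hi) / 3).
  destruct (MVT_open X D a b) as [c [Hc1 Hc2]];
    [unfold a, b; lra| intros; apply Xd; unfold a, b in *; lra| intros; apply Xc|].
  assert (Hsc : sin (dev c) <> 0).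
  { replace c with (x + (c - x)) by ring. apply Hdel.
    apply Rabs_def1; unfold a, b in *; lra. }
  destruct (pos_kernel_zero_cases c ltac:(unfold a, b in *; lra) (H0 c ltac:(unfold a, b in *; lra)))
    as [Dz|Sz]; [|contradiction].
  rewrite Dz, Rmult_0_l in Hc2.
  assert (X a < X b) by (apply Xinc; unfold a, b; lra). lra.
Qed.

Lemma rigidity : (forall x, 0 < x < 2 * PI -> pos_kernel x PI = 0) ->
  forall th, 0 <= th <= 2 * PI -> X th = th + (X PI - PI).
Proof.
  intros H0 th Ht.
  assert (Z : dev th = 0).
  { destruct (Req_dec (dev th) 0) as [|Hn]; auto. exfalso.
    apply (sin_nz (dev th)); [split; [apply Rabs_pos_lt; auto| apply dev_small; auto]|].
    apply sin_dev_zero; auto. }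
  unfold dev in Z. lra.
Qed.

(* For a translation D = 1, so the kernel and I vanish identically. *)
Lemma inner_int_translation c : (forall th, 0 <= th <= 2 * PI -> X th = th + c) ->
  forall ph, 0 <= ph <= 2 * PI -> inner_int ph = 0.
Proof.
  intros Hc ph Hp.
  assert (D1 : forall x, 0 < x < 2 * PI -> D x = 1).
  { intros x Hx. apply (uniqueness_limite X x); [apply Xd; auto|].
    apply derivable_pt_lim_local with (fun t => t + c) (Rmin (x - 0) (2 * PI - x));
      [apply Rmin_pos; lra| |].
    - intros y Hy. apply interior_ball in Hy; [|exact Hx]. rewrite Hc; auto; lra.
    - eapply derivable_pt_lim_eq;
        [apply (derivable_pt_lim_plus id (fun _ => c)), derivable_pt_lim_const; apply derivable_pt_lim_id| ring]. }
  rewrite (inner_int_eq ph (kernel_integrable ph Hp) Hp).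
  apply RiemannInt_null; [generalize two_PI_pos; lra|]. intros x Hx.
  unfold kernel5p3. rewrite D1 by auto. ring.
Qed.

Lemma inner_int_has_integral ph : 0 <= ph <= 2 * PI ->
  has_integral (fun th => kernel5p3 X D th ph) 0 (2 * PI) (inner_int ph).
Proof. intros Hp. exists (kernel_integrable ph Hp). symmetry. apply inner_int_eq; auto. Qed.

Lemma outer_int_theorem : exists J, has_integral inner_int 0 (2 * PI) J /\ 0 <= J /\
  (J = 0 <-> exists c, forall th, in_I th -> X th = th + c).
Proof.
  assert (HT := two_PI_pos). assert (HPI := PI_RGT_0).
  exists (RiemannInt inner_int_integrable). split; [exists inner_int_integrable; reflexivity|].
  split; [|split].
  - apply Rle_trans with (0 * (2 * PI - 0)); [lra|].
    apply RiemannInt_ge_const; [lra|]. apply inner_int_nonneg.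
  - (* J = 0 forces I(PI) = 0, hence pos_kernel(., PI) = 0 *)
    intro HJ. exists (X PI - PI). apply rigidity. intros x Hx.
    set (prG := pos_kernel_integrable PI ltac:(lra)).
    apply (RiemannInt_zero_nonneg _ 0 (2 * PI) x prG); auto.
    + intros; apply pos_kernel_nonneg; auto.
    + apply section_cont; auto using pos_kernel_jcont; try lra. apply Rabs_def1; lra.
    + rewrite <- inner_int_pos_kernel by lra.
      apply (RiemannInt_zero_nonneg _ 0 (2 * PI) PI inner_int_integrable); auto; try lra.
      * apply inner_int_nonneg.
      * apply inner_int_cont; lra.
  - intros [c Hc]. apply RiemannInt_null; [lra|]. intros x Hx.
    apply (inner_int_translation c); auto. lra.
Qed.
End Kernel.

Lemma C1_extension xi dxi : C1_on_I xi dxi ->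
  exists X D, (forall x, continuity_pt X x) /\ (forall x, continuity_pt D x) /\
    (forall x, 0 < x < 2 * PI -> derivable_pt_lim X x (D x)) /\
    (forall x, in_I x -> X x = xi x /\ D x = dxi x).
Proof.
  intros [hxc [hxd hdc]]. assert (Hab := two_PI_pos).
  assert (RC : forall f, cont_on_I f -> forall x, 0 <= x <= 2 * PI -> cont_in f 0 (2 * PI) x).
  { intros f Hf x Hx eps He. destruct (Hf x Hx eps He) as [a [Ha Ha']].
    exists a; split; [lra|]. intros y Hy Hy'. apply (Ha' y). split; auto. }
  exists (fun t => xi (clamp 0 (2 * PI) t)), (fun t => dxi (clamp 0 (2 * PI) t)).
  split; [|split; [|split]].
  - apply cont_in_clamp; [lra| auto].
  - apply cont_in_clamp; [lra| auto].
  - intros x Hx. rewrite clamp_id by lra.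
    apply derivable_pt_lim_local with xi (Rmin (x - 0) (2 * PI - x)); [apply Rmin_pos; lra| |apply hxd; auto].
    intros y Hy. apply interior_ball in Hy; [|exact Hx]. rewrite clamp_id; auto; lra.
  - intros x Hx. rewrite clamp_id by exact Hx. auto.
Qed.

Theorem lemma5p3 (xi dxi : R -> R)
  (hC1 : C1_on_I xi dxi)
  (hinc : forall x y, in_I x -> in_I y -> x < y -> xi x < xi y)
  (hper : xi (2 * PI) = xi 0 + 2 * PI) :
  exists (I : R -> R) (J : R),
    (forall phi, in_I phi -> has_integral (fun theta => kernel5p3 xi dxi theta phi) 0 (2 * PI) (I phi)) /\
    has_integral I 0 (2 * PI) J /\
    0 <= J /\
    (J = 0 <-> exists c : R, forall theta, in_I theta -> xi theta = theta + c).
Proof.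
  assert (HT := two_PI_pos).
  destruct (C1_extension xi dxi hC1) as [X [D [Xc [Dc [Xd Agree]]]]].
  assert (E0 : in_I 0) by (unfold in_I; lra). assert (E2 : in_I (2 * PI)) by (unfold in_I; lra).
  assert (Xinc : forall x y, in_I x -> in_I y -> x < y -> X x < X y)
    by (intros x y Hx Hy; rewrite (proj1 (Agree x Hx)), (proj1 (Agree y Hy)); auto).
  assert (Xper : X (2 * PI) = X 0 + 2 * PI) by (rewrite (proj1 (Agree _ E0)), (proj1 (Agree _ E2)); auto).
  destruct (outer_int_theorem X D Xc Dc Xd Xinc Xper) as [J [HJ [HJ0 HJeq]]].
  exists (inner_int X D Xc Dc Xd Xper), J. split; [|split; [exact HJ| split; [exact HJ0|]]].
  - intros ph Hp. apply has_integral_ext with (fun th => kernel5p3 X D th ph); [lra| |].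
    + intros th Ht. unfold kernel5p3. destruct (Agree th Ht) as [-> ->].
      rewrite (proj1 (Agree ph Hp)). reflexivity.
    + apply inner_int_has_integral; auto.
  - rewrite HJeq. split; intros [c Hc]; exists c; intros th Ht;
      rewrite <- (Hc th Ht); [symmetry|]; apply Agree; auto.
Qed.
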